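(* Let $\pi_n$ be a posterior density on $\Theta$, $f^*_{\hat\theta}$ a probability density symmetric about $\hat\theta\in\Theta$, and $$\mathcal{Q}=\{q_{\hat\theta}=2f^*_{\hat\theta}w_{\hat\theta}:\ w_{\hat\theta}(\theta)\in[0,1],\ w_{\hat\theta}(\theta)=1-w_{\hat\theta}(2\hat\theta-\theta)\ \forall\theta\}.$$ Then $q^*_{\hat\theta}=2f^*_{\hat\theta}w^*_{\hat\theta}\in\mathcal{Q}$ and $$q^*_{\hat\theta}\in\arg\min_{q_{\hat\theta}\in\mathcal{Q}}\mathcal{D}[\pi_n\,\|\,q_{\hat\theta}]$$ for every $\hat\theta\in\Theta$ and sample size $n$, where $\mathcal{D}$ is $\mathcal{D}_{TV}$ or any $\alpha$-divergence $\mathcal{D}_\alpha$, $\alpha\in\mathbb{R}\setminus\{0,1\}$.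
   Context: Posterior $\pi_n(\theta)=\pi(\theta)L(\theta;y_{1:n})/c(y_{1:n})$ on $\Theta\subseteq\mathbb{R}^d$, $\Theta$ symmetric about $\hat\theta$. Symmetric about $\hat\theta$ means $f(\theta)=f(2\hat\theta-\theta)$. Skewness-inducing factor: $w^*_{\hat\theta}(\theta)=\frac{\pi(\theta)L(\theta;y_{1:n})}{\pi(\theta)L(\theta;y_{1:n})+\pi(2\hat\theta-\theta)L(2\hat\theta-\theta;y_{1:n})}$, set to $1/2$ when numerator and denominator both vanish. $\mathcal{D}_{TV}[p\|q]=\tfrac12\int|p-q|$; $\mathcal{D}_\alpha[p\|q]=\frac{1}{\alpha(1-\alpha)}(1-\int p^\alpha q^{1-\alpha})$. *)

From HB Require Import structures.
From mathcomp Require Import all_boot all_order all_algebra.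
From mathcomp Require Import all_classical all_reals all_analysis.
Set Implicit Arguments.
Unset Strict Implicit.
Unset Printing Implicit Defensive.
Import Order.TTheory GRing.Theory Num.Theory.
Import numFieldNormedType.Exports.
Local Open Scope classical_set_scope.
Local Open Scope ring_scope.

(* Points of R^d are d-tuples of reals (with MathComp-Analysis' product
   Borel sigma-algebra on tuples). *)

(* Lebesgue integral over R^d of a nonnegative function, computed as the
   iterated one-dimensional Lebesgue integral (equal to the integral w.r.t.
   d-dimensional Lebesgue measure for nonnegative measurable f, by Tonelli). *)
Fixpoint iint (R : realType) (d : nat) : (d.-tuple R -> \bar R) -> \bar R :=
  match d return (d.-tuple R -> \bar R) -> \bar R with
  | 0 => fun f => f [tuple]
  | d'.+1 => fun f =>
      (\int[@lebesgue_measure R]_x iint (fun t : d'.-tuple R => f (cons_tuple x t)))%E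
  end.

Definition int_on (R : realType) (d : nat) (A : set (d.-tuple R))
  (f : d.-tuple R -> \bar R) : \bar R :=
  iint (fun t => if `[< A t >] then f t else 0%E).

Definition refl (R : realType) (d : nat) (th t : d.-tuple R) : d.-tuple R :=
  [tuple 2 * tnth th i - tnth t i | i < d].

Definition symmetric_set (R : realType) (d : nat) (th : d.-tuple R)
  (A : set (d.-tuple R)) : Prop :=
  forall t, A t -> A (refl th t).

Definition symmetric_fun (R : realType) (d : nat) (th : d.-tuple R)
  (A : set (d.-tuple R)) (f : d.-tuple R -> R) : Prop :=
  forall t, A t -> f t = f (refl th t).

Definition is_density (R : realType) (d : nat) (A : set (d.-tuple R))
  (p : d.-tuple R -> R) : Prop :=
  [/\ measurable_fun A p, (forall t, A t -> 0 <= p t)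
    & int_on A (fun t => (p t)%:E) = 1%E].

Definition epow (R : realType) (x a : R) : \bar R :=
  if x == 0 then (if a < 0 then +oo%E else if a == 0 then 1%E else 0%E)
  else (x `^ a)%:E.

Definition D_TV (R : realType) (d : nat) (A : set (d.-tuple R))
  (p q : d.-tuple R -> R) : \bar R :=
  ((2^-1)%:E * int_on A (fun t => `|p t - q t|%:E))%E.

Definition D_alpha (R : realType) (d : nat) (A : set (d.-tuple R)) (a : R)
  (p q : d.-tuple R -> R) : \bar R :=
  ((a * (1 - a))^-1%:E *
    (1 - int_on A (fun t => epow (p t) a * epow (q t) (1 - a))))%E.

Definition inQ (R : realType) (d : nat) (A : set (d.-tuple R)) (th : d.-tuple R)
  (f : d.-tuple R -> R) (q : d.-tuple R -> R) : Prop :=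
  exists w : d.-tuple R -> R,
    [/\ measurable_fun A w,
        (forall t, A t -> 0 <= w t <= 1),
        (forall t, A t -> w t = 1 - w (refl th t))
      & (forall t, A t -> q t = 2 * f t * w t)].

Definition post (R : realType) (d : nat) (Y : Type) (n : nat) (A : set (d.-tuple R))
  (pi : d.-tuple R -> R) (L : d.-tuple R -> ('I_n -> Y) -> R) (y : 'I_n -> Y)
  (t : d.-tuple R) : R :=
  pi t * L t y / fine (int_on A (fun s => (pi s * L s y)%:E)).

Definition wstar (R : realType) (d : nat) (Y : Type) (n : nat)
  (pi : d.-tuple R -> R) (L : d.-tuple R -> ('I_n -> Y) -> R) (y : 'I_n -> Y)
  (th t : d.-tuple R) : R :=
  let num := pi t * L t y in
  let den := pi t * L t y + pi (refl th t) * L (refl th t) y in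
  if (num == 0) && (den == 0) then 2^-1 else num / den.

From HB Require Import structures.
From mathcomp Require Import all_boot all_order all_algebra.
From mathcomp Require Import all_classical all_reals all_analysis.
From mathcomp Require Import measurable_realfun.
From mathcomp Require Import ring lra.
Set Implicit Arguments.
Unset Strict Implicit.
Unset Printing Implicit Defensive.
Import Order.TTheory GRing.Theory Num.Theory.
Import numFieldNormedType.Exports.
Local Open Scope classical_set_scope.
Local Open Scope ring_scope.

(* Both divergences integrate a pointwise function of (pi_n(t), q(t)).  Since
   Theta, f and Lebesgue measure are invariant under the reflection
   t |-> 2 th - t, it suffices to compare, on each pair {t, 2 th - t}, the sum
   of the two contributions.  On such a pair every q in Q takes the values
   2 f(t) w and 2 f(t) (1 - w) for some w in [0, 1], while pi_n takes the values
   S v and S (1 - v), where S is their sum and v is the value of w* at t.  The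
   pair contribution is minimised at w = v: for D_TV by the triangle
   inequality, for 0 < alpha < 1 by Hoelder's inequality (v maximises the
   affinity int pi_n^alpha q^(1-alpha)), and for alpha outside [0, 1] by the
   reverse Hoelder inequality.  Neither the normalising constant of pi_n nor
   int f = 1 plays any role. *)

Section reflection_invariance.
Context {R : realType}.
Local Open Scope ereal_scope.
Local Notation mu := (@lebesgue_measure R).

Let measurable_subl (c : R) : measurable_fun [set: R] (fun x : R => c - x)%R.
Proof. exact: measurable_funB. Qed.

Lemma lebesgue_measure_reflect (c : R) (A : set R) : measurable A ->
  pushforward mu ((fun x => c - x)%R : R -> measurableTypeR R) A = mu A.
Proof.
move=> mA; apply/esym/lebesgue_measure_unique => //; first exact: measurable_subl.
move=> ? _ [[a b]] _ <- /=; rewrite /pushforward.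
have -> : (fun x : R => c - x)%R @^-1` `]a, b]%classic = `[(c - b)%R, (c - a)%R[%classic.
  by apply/seteqP; split => x /=; rewrite !in_itv /= => /andP[? ?];
    apply/andP; split; lra.
rewrite !lebesgue_measure_itv /= !lte_fin ltrD2l ltrN2.
by case: ifP => // _; rewrite -!EFinD; congr (_%:E); lra.
Qed.

Lemma ge0_integral_reflect (c : R) (F : R -> \bar R) :
  measurable_fun [set: R] F -> (forall x, 0 <= F x) ->
  \int[mu]_x F (c - x)%R = \int[mu]_x F x.
Proof.
move=> mF F0.
have := @ge0_integral_pushforward _ _ (measurableTypeR R) (measurableTypeR R) R _
  (measurable_subl c) mu setT F measurableT mF (fun x _ => F0 x).
rewrite preimage_setT => <-.
apply: eq_measure_integral; first exact: measurable_subl.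
by move=> ? A mA _; exact: lebesgue_measure_reflect.
Qed.

End reflection_invariance.

Section iterated_integral.
Context {R : realType}.
Local Open Scope ereal_scope.

Lemma iint_ge0 d (g : d.-tuple R -> \bar R) : (forall t, 0 <= g t) -> 0 <= iint g.
Proof.
elim: d g => [|d IH] g g0 /=; first exact: g0.
by apply: integral_ge0 => x _; apply: IH.
Qed.

Lemma measurable_iint d dX (X : measurableType dX) (G : X * d.-tuple R -> \bar R) :
  measurable_fun [set: X * d.-tuple R] G -> (forall z, 0 <= G z) ->
  measurable_fun [set: X] (fun x => iint (fun t => G (x, t))).
Proof.
elim: d dX X G => [|d IH] dX X G mG G0 /=.
  by apply: (measurableT_comp mG); exact: measurable_fun_pair.
pose H (p : (X * R) * d.-tuple R) := G (p.1.1, cons_tuple p.1.2 p.2).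
have mH : measurable_fun [set: (X * R) * d.-tuple R] H.
  apply: (measurableT_comp mG); apply: measurable_fun_pair.
    exact: (measurableT_comp measurable_fst measurable_fst).
  apply: measurable_cons; last exact: measurable_snd.
  exact: (measurableT_comp measurable_snd measurable_fst).
apply: (@measurable_fun_fubini_tonelli_F _ _ X (measurableTypeR R) R lebesgue_measure _
  (IH _ _ H mH (fun z => G0 _))).
by move=> z; apply: iint_ge0 => t; exact: G0.
Qed.

Lemma measurable_iint_cons d (g : d.+1.-tuple R -> \bar R) :
  measurable_fun [set: d.+1.-tuple R] g -> (forall t, 0 <= g t) ->
  measurable_fun [set: R] (fun x => iint (fun t : d.-tuple R => g (cons_tuple x t))).
Proof.
move=> mg g0.
apply: (@measurable_iint _ _ R (fun p : R * d.-tuple R => g (cons_tuple p.1 p.2))) => //.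
apply: (measurableT_comp mg); apply: measurable_cons; [exact: measurable_fst|exact: measurable_snd].
Qed.

Lemma ge0_iintD d (g h : d.-tuple R -> \bar R) :
  measurable_fun [set: d.-tuple R] g -> measurable_fun [set: d.-tuple R] h ->
  (forall t, 0 <= g t) -> (forall t, 0 <= h t) ->
  iint (fun t => g t + h t) = iint g + iint h.
Proof.
elim: d g h => [|d IH] g h mg mh g0 h0 //=.
rewrite -ge0_integralD //; try by [move=> x _; apply: iint_ge0|exact: measurable_iint_cons].
apply: eq_integral => x _; apply: IH => //; exact: measurableT_comp (measurable_cons _ _).
Qed.

Lemma ge0_le_iint d (g h : d.-tuple R -> \bar R) :
  measurable_fun [set: d.-tuple R] g -> measurable_fun [set: d.-tuple R] h ->
  (forall t, 0 <= g t) -> (forall t, g t <= h t) -> iint g <= iint h.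
Proof.
elim: d g h => [|d IH] g h mg mh g0 gh //=.
have h0 t : 0 <= h t by exact: le_trans (g0 t) (gh t).
apply: ge0_le_integral => //; try by [move=> x _; apply: iint_ge0|exact: measurable_iint_cons].
move=> x _; apply: IH => //; exact: measurableT_comp (measurable_cons _ _).
Qed.

Lemma int_on_ge0 d (A : set (d.-tuple R)) (F : d.-tuple R -> \bar R) :
  (forall t, A t -> 0 <= F t) -> 0 <= int_on A F.
Proof. by move=> F0; apply: iint_ge0 => t; case: asboolP => // /F0. Qed.

End iterated_integral.

Section reflection.
Context {R : realType}.
Local Open Scope ereal_scope.

Lemma reflK d (th : d.-tuple R) : involutive (refl th).
Proof. by move=> t; apply: eq_from_tnth => i; rewrite !tnth_mktuple; lra. Qed.

Lemma refl_cons d (th : d.+1.-tuple R) (x : R) (t : d.-tuple R) :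
  refl th (cons_tuple x t) = cons_tuple (2 * thead th - x)%R (refl [tuple of behead th] t).
Proof.
apply: eq_from_tnth => i; rewrite tnth_mktuple [in LHS](tuple_eta th).
by case: (unliftP ord0 i) => [j ->|->]; rewrite ?tnthS ?tnth0 ?tnth_mktuple.
Qed.

Lemma measurable_refl d (th : d.-tuple R) : measurable_fun [set: d.-tuple R] (refl th).
Proof.
apply/measurable_fun_tnthP => i.
rewrite (_ : _ \o _ = fun t : d.-tuple R => 2 * tnth th i - tnth t i)%R; last first.
  by apply/funext => t /=; rewrite tnth_mktuple.
by apply: measurable_funB => //; exact: measurable_tnth.
Qed.

Lemma ge0_iint_refl d (th : d.-tuple R) (g : d.-tuple R -> \bar R) :
  measurable_fun [set: d.-tuple R] g -> (forall t, 0 <= g t) ->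
  iint (g \o refl th) = iint g.
Proof.
elim: d th g => [|d IH] th g mg g0 /=.
  by rewrite [refl th _]tuple0.
rewrite -[RHS](ge0_integral_reflect (2 * thead th)); last 2 first.
- exact: measurable_iint_cons.
- by move=> x; apply: iint_ge0.
apply: eq_integral => x _; rewrite -[RHS](IH [tuple of behead th]).
- by congr iint; apply/funext => t; rewrite /= refl_cons.
- exact: measurableT_comp (measurable_cons _ _).
- by [].
Qed.

Lemma symmetric_setE d (th : d.-tuple R) (A : set (d.-tuple R)) t :
  symmetric_set th A -> A (refl th t) = A t.
Proof.
by move=> sA; apply/propext; split => [/sA|/sA //]; rewrite reflK.
Qed.

(* [refl th] preserves Lebesgue measure, so the integral of [f + f \o refl th]
   is twice that of [f]. *)
Lemma ge0_le_iint_refl_pair d (th : d.-tuple R) (f g : d.-tuple R -> \bar R) :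
  measurable_fun [set: d.-tuple R] f -> measurable_fun [set: d.-tuple R] g ->
  (forall t, 0 <= f t) -> (forall t, 0 <= g t) ->
  (forall t, f t + f (refl th t) <= g t + g (refl th t)) -> iint f <= iint g.
Proof.
move=> mf mg f0 g0 fg.
have mfr := measurableT_comp mf (measurable_refl th).
have mgr := measurableT_comp mg (measurable_refl th).
have twice : iint f + iint f <= iint g + iint g.
  rewrite -{2}(ge0_iint_refl th mf f0) -{2}(ge0_iint_refl th mg g0).
  rewrite -!ge0_iintD //; try by move=> t /=.
  apply: ge0_le_iint => //; try exact: emeasurable_funD.
  by move=> t; apply: adde_ge0; exact: f0.
move: twice (iint_ge0 f0) (iint_ge0 g0).
case: (iint f) => [x| |]; case: (iint g) => [z| |] //=; rewrite ?leey //.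
by rewrite -!EFinD !lee_fin => ? _ _; lra.
Qed.

Lemma le_int_on_refl_pair d (A : set (d.-tuple R)) (th : d.-tuple R)
    (F G : d.-tuple R -> \bar R) :
  measurable A -> symmetric_set th A ->
  measurable_fun A F -> measurable_fun A G ->
  (forall t, A t -> 0 <= F t) -> (forall t, A t -> 0 <= G t) ->
  (forall t, A t -> F t + F (refl th t) <= G t + G (refl th t)) ->
  int_on A F <= int_on A G.
Proof.
move=> mA sA mF mG F0 G0 FG; rewrite /int_on; apply: (ge0_le_iint_refl_pair (th := th)).
- exact: (measurable_restrictT F mA).1 mF.
- exact: (measurable_restrictT G mA).1 mG.
- by move=> t; case: asboolP => // /F0.
- by move=> t; case: asboolP => // /G0.
move=> t; rewrite symmetric_setE //.
by case: asboolP => At; [exact: FG|rewrite adde0].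
Qed.

End reflection.

Section hoelder_two_terms.
Context {R : realType}.

Lemma hoelder2_powR (l u1 u2 v1 v2 : R) : 0 < l < 1 ->
  0 <= u1 -> 0 <= u2 -> 0 <= v1 -> 0 <= v2 ->
  u1 `^ l * v1 `^ (1 - l) + u2 `^ l * v2 `^ (1 - l) <=
  (u1 + u2) `^ l * (v1 + v2) `^ (1 - l).
Proof.
move=> /andP[l0 l1] u10 u20 v10 v20.
have powRK (x k : R) : 0 <= x -> k != 0 -> (x `^ k) `^ k^-1 = x.
  by move=> x0 k0; rewrite -powRrM mulfV // powRr1.
have := hoelder2 (powR_ge0 u1 l) (powR_ge0 u2 l) (powR_ge0 v1 (1 - l))
  (powR_ge0 v2 (1 - l)) (p := l^-1) (q := (1 - l)^-1).
rewrite !invrK !powRK ?gt_eqF ?subr_gt0 //; apply.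
- by rewrite invr_gt0.
- by rewrite invr_gt0 subr_gt0.
- by rewrite subrKC.
Qed.

(* Hoelder with exponents [l = a^-1] and [1 - l], applied to [z_i = x_i^a y_i^(1-a)]
   and [y_i], since [x_i = z_i^l y_i^(1-l)]. *)
Lemma rev_hoelder2_powR (a x1 x2 y1 y2 : R) : 1 < a ->
  0 <= x1 -> 0 <= x2 -> 0 <= y1 -> 0 <= y2 ->
  (y1 = 0 -> x1 = 0) -> (y2 = 0 -> x2 = 0) -> 0 < y1 + y2 ->
  (x1 + x2) `^ a * (y1 + y2) `^ (1 - a) <=
  x1 `^ a * y1 `^ (1 - a) + x2 `^ a * y2 `^ (1 - a).
Proof.
move=> a1 x10 x20 y10 y20 xy1 xy2 y12.
have a0 : 0 < a by lra.
set l := a^-1.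
have l01 : 0 < l < 1 by rewrite invr_gt0 a0 /= invf_lt1.
have l1 : 1 - l != 0 by rewrite subr_eq0 eq_sym lt_eqF //; case/andP: l01.
have unfold_x (x y : R) : 0 <= x -> 0 <= y -> (y = 0 -> x = 0) ->
    x = (x `^ a * y `^ (1 - a)) `^ l * y `^ (1 - l).
  move=> x0 y0 xy; have [y0E|yn0] := eqVneq y 0.
    by rewrite y0E xy // (powR0 l1) mulr0.
  rewrite powRM ?powR_ge0 // -!powRrM mulfV ?gt_eqF // powRr1 //.
  rewrite -mulrA -powRD ?yn0 ?implybT //.
  have -> : (1 - a) * l + (1 - l) = 0 by rewrite /l; field; rewrite gt_eqF.
  by rewrite powRr0 mulr1.
set z1 := x1 `^ a * y1 `^ (1 - a); set z2 := x2 `^ a * y2 `^ (1 - a).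
have z10 : 0 <= z1 by rewrite mulr_ge0 ?powR_ge0.
have z20 : 0 <= z2 by rewrite mulr_ge0 ?powR_ge0.
have := hoelder2_powR l01 z10 z20 y10 y20.
rewrite -(unfold_x _ _ x10 y10 xy1) -(unfold_x _ _ x20 y20 xy2) => hx.
have hxa : (x1 + x2) `^ a <= ((z1 + z2) `^ l * (y1 + y2) `^ (1 - l)) `^ a.
  by apply: ge0_ler_powR; rewrite ?nnegrE ?addr_ge0 ?mulr_ge0 ?powR_ge0 // ltW.
rewrite powRM ?powR_ge0 // -!powRrM mulVf ?gt_eqF // powRr1 ?addr_ge0 // in hxa.
rewrite -(ler_pM2r (powR_gt0 (1 - a) y12)) in hxa.
apply: (le_trans hxa); rewrite -mulrA -powRD ?(gt_eqF y12) ?implybT //.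
have -> : (1 - l) * a + (1 - a) = 0 by rewrite /l; field; rewrite gt_eqF.
by rewrite powRr0 mulr1.
Qed.

Lemma tv_pair_le (p1 p2 c w ws : R) : 0 <= ws <= 1 ->
  p1 = (p1 + p2) * ws -> p2 = (p1 + p2) * (1 - ws) ->
  `|p1 - c * ws| + `|p2 - c * (1 - ws)| <= `|p1 - c * w| + `|p2 - c * (1 - w)|.
Proof.
move=> /andP[ws0 ws1] p1E p2E.
have -> : p1 - c * ws = (p1 + p2 - c) * ws by rewrite [in LHS]p1E; ring.
have -> : p2 - c * (1 - ws) = (p1 + p2 - c) * (1 - ws) by rewrite [in LHS]p2E; ring.
rewrite !normrM (ger0_norm ws0) [`|1 - ws|]ger0_norm ?subr_ge0 // -mulrDr subrKC mulr1.
have -> : p1 + p2 - c = (p1 - c * w) + (p2 - c * (1 - w)) by ring.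
exact: ler_normD.
Qed.

End hoelder_two_terms.

Section alpha_integrand.
Context {R : realType}.
Local Open Scope ereal_scope.

Lemma epow_ge0 (x a : R) : 0 <= epow x a.
Proof.
rewrite /epow; case: ifPn => _; last by rewrite lee_fin powR_ge0.
by case: ifPn => _ //; case: ifPn.
Qed.

Lemma gt0_epow (x a : R) : (0 < x)%R -> epow x a = (x `^ a)%:E.
Proof. by move=> x0; rewrite /epow gt_eqF. Qed.

Lemma epow0_lt0 (a : R) : (a < 0)%R -> epow 0 a = +oo.
Proof. by move=> a0; rewrite /epow eqxx a0. Qed.

Lemma epow0_gt0 (a : R) : (0 < a)%R -> epow 0 a = 0.
Proof. by move=> a0; rewrite /epow eqxx ltNge (ltW a0) /= gt_eqF. Qed.

Lemma epow_gt0E (x a : R) : (0 < a)%R -> epow x a = (x `^ a)%:E.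
Proof.
move=> a0; have [->|x0] := eqVneq x 0%R; last by rewrite /epow (negbTE x0).
by rewrite epow0_gt0 // powR0 // gt_eqF.
Qed.

Lemma epowMr (x w a : R) : (0 <= x)%R -> (0 < w)%R ->
  epow (x * w)%R a = epow x a * (w `^ a)%:E.
Proof.
move=> x0 w0; have [->|xn0] := eqVneq x 0%R.
  rewrite mul0r /epow eqxx; case: ifPn => [_|]; first by rewrite gt0_mulye ?lte_fin ?powR_gt0.
  by case: ifPn => [/eqP ->|_]; rewrite ?powRr0 ?mule1 ?mul0e.
have xpos : (0 < x)%R by rewrite lt0r xn0.
by rewrite !gt0_epow ?mulr_gt0 // powRM ?EFinM // ltW.
Qed.

Lemma measurable_epow (a : R) : measurable_fun [set: R] (fun x : R => epow x a).
Proof.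
apply: measurable_fun_ifT.
- by apply: measurable_fun_eqr => //; exact: measurable_cst.
- exact: measurable_cst.
- by apply/measurable_EFinP; exact: measurable_powR.
Qed.

Definition alpha_integrand (a x y : R) : \bar R := epow x a * epow y (1 - a).

Lemma alpha_integrand_ge0 (a x y : R) : 0 <= alpha_integrand a x y.
Proof. by rewrite mule_ge0 ?epow_ge0. Qed.

Lemma alpha_integrandC (a x y : R) : alpha_integrand a x y = alpha_integrand (1 - a) y x.
Proof. by rewrite /alpha_integrand muleC subKr. Qed.

Lemma alpha_integrand00 (a : R) : alpha_integrand a 0 0 = 0.
Proof.
rewrite /alpha_integrand; have [a0|a0|->] := ltrgtP a 0%R.
- by rewrite (epow0_gt0 (_ : 0 < 1 - a)%R) ?mule0 //; lra.
- by rewrite epow0_gt0 ?mul0e.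
- by rewrite subr0 (epow0_gt0 ltr01) mule0.
Qed.

Lemma alpha_integrandMr (a x y w : R) : (0 <= x)%R -> (0 <= y)%R -> (0 <= w)%R ->
  alpha_integrand a (x * w)%R (y * w)%R = alpha_integrand a x y * w%:E.
Proof.
move=> x0 y0; rewrite le0r => /predU1P[->|w0]; first by rewrite !mulr0 alpha_integrand00 mule0.
rewrite /alpha_integrand !epowMr // muleACA -EFinM -powRD ?(gt_eqF w0) ?implybT //.
by rewrite subrKC (powRr1 (ltW w0)).
Qed.

(* The integrand is jointly homogeneous of degree one. *)
Lemma alpha_integrand_split (a x y w : R) : (0 <= x)%R -> (0 <= y)%R -> (0 <= w <= 1)%R ->
  alpha_integrand a (x * w)%R (y * w)%R + alpha_integrand a (x * (1 - w))%R (y * (1 - w))%R =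
  alpha_integrand a x y.
Proof.
move=> x0 y0 /andP[w0 w1].
rewrite !alpha_integrandMr ?subr_ge0 // -ge0_muleDr ?lee_fin ?subr_ge0 //.
by rewrite -EFinD subrKC mule1.
Qed.

Lemma alpha_integrand_hoelder (a x1 x2 y1 y2 : R) : (0 < a < 1)%R ->
  (0 <= x1)%R -> (0 <= x2)%R -> (0 <= y1)%R -> (0 <= y2)%R ->
  alpha_integrand a x1 y1 + alpha_integrand a x2 y2 <= alpha_integrand a (x1 + x2)%R (y1 + y2)%R.
Proof.
move=> a01 x10 x20 y10 y20; have /andP[a0 a1] := a01.
rewrite /alpha_integrand !epow_gt0E ?subr_gt0 // -!EFinM -EFinD lee_fin.
exact: hoelder2_powR.
Qed.

Lemma alpha_integrand_gt1 (a x y : R) : (1 < a)%R -> (0 <= x)%R -> (0 <= y)%R ->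
  alpha_integrand a x y = +oo \/
  (y = 0%R -> x = 0%R) /\ alpha_integrand a x y = (x `^ a * y `^ (1 - a))%:E.
Proof.
move=> a1 x0 y0; rewrite /alpha_integrand epow_gt0E; last lra.
have [y0E|yn0] := eqVneq y 0%R; last first.
  by right; split=> [/eqP|]; rewrite ?(negbTE yn0) // gt0_epow ?lt0r ?yn0 // -EFinM.
rewrite y0E epow0_lt0; last lra.
have [x0E|xn0] := eqVneq x 0%R; last by left; rewrite gt0_muley // lte_fin powR_gt0 // lt0r xn0.
right; split=> //; rewrite x0E !powR0 ?mul0r ?mul0e //.
all: by apply/negP => /eqP ?; lra.
Qed.

Lemma alpha_integrand_rev_hoelder (a x1 x2 y1 y2 : R) : (a < 0 \/ 1 < a)%R ->
  (0 <= x1)%R -> (0 <= x2)%R -> (0 <= y1)%R -> (0 <= y2)%R ->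
  alpha_integrand a (x1 + x2)%R (y1 + y2)%R <= alpha_integrand a x1 y1 + alpha_integrand a x2 y2.
Proof.
wlog a1 : a x1 x2 y1 y2 / (1 < a)%R.
  move=> gt1 [a0|a1] x10 x20 y10 y20; last by apply: gt1 => //; right.
  by rewrite !(alpha_integrandC a); apply: gt1 => //; [lra|right; lra].
move=> _ x10 x20 y10 y20.
case: (alpha_integrand_gt1 a1 x10 y10) => [->|[xy1 ->]].
  by rewrite addye ?leey // gt_eqF // (lt_le_trans _ (alpha_integrand_ge0 _ _ _)) ?ltNye.
case: (alpha_integrand_gt1 a1 x20 y20) => [->|[xy2 ->]]; first by rewrite addey ?leey.
have [y12|y12] := eqVneq (y1 + y2)%R 0%R.
  have [y10' y20'] : y1 = 0%R /\ y2 = 0%R by split; lra.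
  rewrite y12 xy1 // xy2 // addr0 alpha_integrand00 -EFinD lee_fin.
  by rewrite addr_ge0 // mulr_ge0 ?powR_ge0.
have y12pos : (0 < y1 + y2)%R by rewrite lt0r y12 addr_ge0.
have a0 : (0 < a)%R by lra.
rewrite /alpha_integrand (gt0_epow _ y12pos) (epow_gt0E _ a0) -EFinM -EFinD lee_fin.
exact: rev_hoelder2_powR.
Qed.

End alpha_integrand.

Section alpha_pair.
Context {R : realType}.
Local Open Scope ereal_scope.
Variables (a x1 x2 c w ws : R).
Hypotheses (x10 : (0 <= x1)%R) (x20 : (0 <= x2)%R) (c0 : (0 <= c)%R).
Hypotheses (w01 : (0 <= w <= 1)%R) (ws01 : (0 <= ws <= 1)%R).
Hypotheses (x1E : x1 = ((x1 + x2) * ws)%R) (x2E : x2 = ((x1 + x2) * (1 - ws))%R).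

Lemma alpha_integrand_pairE :
  alpha_integrand a x1 (c * ws) + alpha_integrand a x2 (c * (1 - ws)) =
  alpha_integrand a (x1 + x2) c.
Proof.
rewrite -[RHS](alpha_integrand_split a _ _ ws01) ?addr_ge0 //.
by rewrite -x1E -x2E.
Qed.

Let splitE : c = (c * w + c * (1 - w))%R.
Proof. by rewrite -mulrDr subrKC mulr1. Qed.

Let cw0 : (0 <= c * w)%R.
Proof. by case/andP: w01 => w0 _; rewrite mulr_ge0. Qed.

Let cw1 : (0 <= c * (1 - w))%R.
Proof. by case/andP: w01 => _ w1; rewrite mulr_ge0 ?subr_ge0. Qed.

Lemma alpha_pair_ge : (0 < a < 1)%R ->
  alpha_integrand a x1 (c * w) + alpha_integrand a x2 (c * (1 - w)) <=
  alpha_integrand a x1 (c * ws) + alpha_integrand a x2 (c * (1 - ws)).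
Proof.
move=> a01; rewrite alpha_integrand_pairE [in X in _ <= X]splitE.
exact: alpha_integrand_hoelder.
Qed.

Lemma alpha_pair_le : (a < 0 \/ 1 < a)%R ->
  alpha_integrand a x1 (c * ws) + alpha_integrand a x2 (c * (1 - ws)) <=
  alpha_integrand a x1 (c * w) + alpha_integrand a x2 (c * (1 - w)).
Proof.
move=> a01; rewrite alpha_integrand_pairE [in X in X <= _]splitE.
exact: alpha_integrand_rev_hoelder.
Qed.

End alpha_pair.

Section optimal_weight.
Context {R : realType} {d : nat}.
Variables (A : set (d.-tuple R)) (th : d.-tuple R) (p f ws : d.-tuple R -> R).
Hypotheses (mA : measurable A) (symA : symmetric_set th A).
Hypotheses (mp : measurable_fun A p) (mf : measurable_fun A f) (mws : measurable_fun A ws).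
Hypotheses (p0 : forall t, A t -> 0 <= p t) (f0 : forall t, A t -> 0 <= f t).
Hypothesis fsym : symmetric_fun th A f.
Hypothesis ws01 : forall t, A t -> 0 <= ws t <= 1.
Hypothesis ws_refl : forall t, A t -> ws t = 1 - ws (refl th t).
Hypothesis p_split : forall t, A t -> p t = (p t + p (refl th t)) * ws t.

Local Notation qs := (fun t => 2 * f t * ws t).

Let p_split_refl t : A t -> p (refl th t) = (p t + p (refl th t)) * (1 - ws t).
Proof. by move=> At; rewrite mulrBr mulr1 -p_split //; ring. Qed.

Let measurable_2fM (w : d.-tuple R -> R) :
  measurable_fun A w -> measurable_fun A (fun t => 2 * f t * w t).
Proof. by move=> mw; apply: measurable_funM => //; apply: measurable_funM. Qed.

Let refl_2fM (w : d.-tuple R -> R) t : A t -> w t = 1 - w (refl th t) ->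
  2 * f (refl th t) * w (refl th t) = 2 * f t * (1 - w t).
Proof. by move=> At wE; rewrite -fsym // wE subKr. Qed.

Lemma inQ_weight : inQ A th f qs.
Proof. by exists ws; split => //; exact: measurable_2fM. Qed.

Let inQ_pair q : inQ A th f q -> measurable_fun A q /\ exists2 w : d.-tuple R -> R,
  (forall t, A t -> 0 <= w t <= 1) &
  (forall t, A t -> q t = 2 * f t * w t /\ q (refl th t) = 2 * f t * (1 - w t)).
Proof.
move=> [w [mw w01 w_refl qE]]; split.
  by apply: eq_measurable_fun (measurable_2fM mw) => t /set_mem /qE.
exists w => // t At; split; first exact: qE.
by rewrite qE; [exact: refl_2fM At (w_refl t At)|exact: symA].
Qed.

Lemma D_TV_weight_le q : inQ A th f q -> (D_TV A p qs <= D_TV A p q)%E.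
Proof.
move=> /inQ_pair[mq [w _ qE]].
have mTV (r : d.-tuple R -> R) :
    measurable_fun A r -> measurable_fun A (fun t => (`|p t - r t|)%:E).
  move=> mr; apply/measurable_EFinP; apply: measurableT_comp.
    exact: normr_measurable.
  exact: measurable_funB.
rewrite /D_TV; apply: lee_wpmul2l; first by rewrite lee_fin invr_ge0.
apply: (le_int_on_refl_pair mA symA (mTV _ (measurable_2fM mws)) (mTV _ mq)).
- by move=> t _; rewrite lee_fin.
- by move=> t _; rewrite lee_fin.
move=> t At.
rewrite -!EFinD lee_fin (refl_2fM At (ws_refl At)); case: (qE t At) => -> ->.
exact: tv_pair_le (ws01 At) (p_split At) (p_split_refl At).
Qed.

Let f2_ge0 t : A t -> 0 <= 2 * f t.
Proof. by move=> At; rewrite mulr_ge0 ?f0. Qed.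

Let measurable_alpha (a : R) (r : d.-tuple R -> R) : measurable_fun A r ->
  measurable_fun A (fun t => alpha_integrand a (p t) (r t)).
Proof.
move=> mr; apply: emeasurable_funM.
- exact: measurableT_comp (measurable_epow a) mp.
- exact: measurableT_comp (measurable_epow (1 - a)) mr.
Qed.

Lemma int_alpha_weight_ge a q : 0 < a < 1 -> inQ A th f q ->
  (int_on A (fun t => alpha_integrand a (p t) (q t)) <=
   int_on A (fun t => alpha_integrand a (p t) (qs t)))%E.
Proof.
move=> a01 /inQ_pair[mq [w w01 qE]].
apply: (le_int_on_refl_pair mA symA).
- exact: measurable_alpha mq.
- exact: measurable_alpha (measurable_2fM mws).
- by move=> t _; exact: alpha_integrand_ge0.
- by move=> t _; exact: alpha_integrand_ge0.
move=> t At; rewrite (refl_2fM At (ws_refl At)); case: (qE t At) => -> ->.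
exact: alpha_pair_ge (p0 At) (p0 (symA At)) (f2_ge0 At) (w01 t At) (ws01 At)
  (p_split At) (p_split_refl At) a01.
Qed.

Lemma int_alpha_weight_le a q : a < 0 \/ 1 < a -> inQ A th f q ->
  (int_on A (fun t => alpha_integrand a (p t) (qs t)) <=
   int_on A (fun t => alpha_integrand a (p t) (q t)))%E.
Proof.
move=> a01 /inQ_pair[mq [w w01 qE]].
apply: (le_int_on_refl_pair mA symA).
- exact: measurable_alpha (measurable_2fM mws).
- exact: measurable_alpha mq.
- by move=> t _; exact: alpha_integrand_ge0.
- by move=> t _; exact: alpha_integrand_ge0.
move=> t At; rewrite (refl_2fM At (ws_refl At)); case: (qE t At) => -> ->.
exact: alpha_pair_le (p0 At) (p0 (symA At)) (f2_ge0 At) (w01 t At) (ws01 At)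
  (p_split At) (p_split_refl At) a01.
Qed.

Lemma D_alpha_weight_le a q : a != 0 -> a != 1 -> inQ A th f q ->
  (D_alpha A a p qs <= D_alpha A a p q)%E.
Proof.
move=> a0 a1 hq; rewrite /D_alpha.
have [a01|a_out] : 0 < a < 1 \/ (a < 0 \/ 1 < a).
  have [a_lt0|a_ge0] := ltrP a 0; first by right; left.
  have [a_gt1|a_le1] := ltrP 1 a; first by right; right.
  by left; rewrite !lt_neqAle eq_sym a0 a_ge0 a1 a_le1.
- apply: lee_wpmul2l.
    case/andP: a01 => a_gt0 a_lt1.
    by rewrite lee_fin invr_ge0 mulr_ge0 // ?subr_ge0; apply: ltW.
  exact: leeB (lexx _) (int_alpha_weight_ge a01 hq).
- have k_lt0 : (a * (1 - a))^-1 < 0 by rewrite invr_lt0; case: a_out => ?; nra.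
  rewrite -(opprK (a * (1 - a))^-1) EFinN !mulNe leeN2.
  apply: lee_wpmul2l; first by rewrite lee_fin oppr_ge0 ltW.
  exact: leeB (lexx _) (int_alpha_weight_le a_out hq).
Qed.

End optimal_weight.

Section weight_ratio.
Context {R : realType}.

Definition weight_ratio (u v : R) : R :=
  if (u == 0) && (u + v == 0) then 2^-1 else u / (u + v).

Variables (u v : R).
Hypotheses (u0 : 0 <= u) (v0 : 0 <= v).

Let uv0 : u + v = 0 -> u = 0 /\ v = 0.
Proof. by move/eqP; rewrite paddr_eq0 // => /andP[/eqP -> /eqP ->]. Qed.

Lemma weight_ratio_itv : 0 <= weight_ratio u v <= 1.
Proof.
rewrite /weight_ratio; have [uv|uv] := eqVneq (u + v) 0.
  have [-> ->] := uv0 uv.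
  by rewrite addr0 eqxx /= invr_ge0 ler0n invf_le1 ?ltr0n ?ler1n.
have uv_gt0 : 0 < u + v by rewrite lt0r uv addr_ge0.
by rewrite andbF divr_ge0 ?addr_ge0 //= ler_pdivrMr // mul1r lerDl.
Qed.

Lemma weight_ratioC : weight_ratio u v = 1 - weight_ratio v u.
Proof.
rewrite /weight_ratio (addrC v u); have [uv|uv] := eqVneq (u + v) 0.
  by have [-> ->] := uv0 uv; rewrite eqxx /=; field.
by rewrite !andbF; field.
Qed.

Lemma weight_ratio_split : u = (u + v) * weight_ratio u v.
Proof.
rewrite /weight_ratio; have [uv|uv] := eqVneq (u + v) 0.
  by have [-> ->] := uv0 uv; rewrite addr0 mul0r.
by rewrite andbF mulrC divfK.
Qed.

End weight_ratio.

Lemma measurable_weight_ratio {R : realType} {d : measure_display} (T : measurableType d)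
    (D : set T) (g h : T -> R) :
  measurable D -> measurable_fun D g -> measurable_fun D h ->
  (forall t, D t -> 0 <= g t) -> (forall t, D t -> 0 <= h t) ->
  measurable_fun D (fun t => weight_ratio (g t) (h t)).
Proof.
move=> mD mg mh g0 h0.
have mgh : measurable_fun D (fun t => g t + h t) by exact: measurable_funD.
apply: (eq_measurable_fun (fun t => if g t + h t == 0 then 2^-1
                                     else g t * (g t + h t) `^ (-1))).
  move=> t /set_mem Dt; rewrite /weight_ratio; have [gh|gh] := eqVneq (g t + h t) 0.
    by move/eqP: gh; rewrite (paddr_eq0 (g0 t Dt) (h0 t Dt)) => /andP[-> _].
  by rewrite andbF powR_inv1 // addr_ge0 ?g0 ?h0.
apply: measurable_fun_if => //.
- by apply: (measurable_fun_eqr (g := fun=> 0)) => //; exact: measurable_cst.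
- apply: (measurable_funS mD (@subIsetl _ _ _)); apply: measurable_funM => //.
  exact: measurableT_comp (measurable_powR _) mgh.
Qed.

Section posterior.
Context {R : realType} {d : nat} {Y : Type} {n : nat}.
Variables (Theta : set (d.-tuple R)) (th : d.-tuple R) (y : 'I_n -> Y).
Variables (pi : d.-tuple R -> R) (L : d.-tuple R -> ('I_n -> Y) -> R).
Hypotheses (mT : measurable Theta) (symT : symmetric_set th Theta).
Hypotheses (mpi : measurable_fun Theta pi) (mL : measurable_fun Theta (fun t => L t y)).
Hypotheses (pi0 : forall t, Theta t -> 0 <= pi t) (L0 : forall t, Theta t -> 0 <= L t y).

Local Notation P := (fun t => pi t * L t y).

Let P0 t : Theta t -> 0 <= P t.
Proof. by move=> Tt; rewrite mulr_ge0 ?pi0 ?L0. Qed.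

Let wstarE t : wstar pi L y th t = weight_ratio (P t) (P (refl th t)).
Proof. by []. Qed.

Lemma wstar_itv t : Theta t -> 0 <= wstar pi L y th t <= 1.
Proof. by move=> Tt; rewrite wstarE; exact: weight_ratio_itv (P0 Tt) (P0 (symT Tt)). Qed.

Lemma wstar_refl t : Theta t -> wstar pi L y th t = 1 - wstar pi L y th (refl th t).
Proof. by move=> Tt; rewrite !wstarE reflK (weight_ratioC (P0 Tt) (P0 (symT Tt))). Qed.

Lemma measurable_wstar : measurable_fun Theta (wstar pi L y th).
Proof.
have mP : measurable_fun Theta P by exact: measurable_funM.
apply: measurable_weight_ratio => //; last by move=> t /symT /P0.
apply: (measurable_comp mT _ mP); first by move=> _ [t Tt <-]; exact: symT.
exact: measurable_funS (measurable_refl th).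
Qed.

Lemma post_ge0 t : Theta t -> 0 <= post Theta pi L y t.
Proof.
move=> Tt; apply: divr_ge0; first exact: P0.
by apply/fine_ge0/int_on_ge0 => s Ts; rewrite lee_fin; exact: P0.
Qed.

Lemma post_split t : Theta t ->
  post Theta pi L y t = (post Theta pi L y t + post Theta pi L y (refl th t)) * wstar pi L y th t.
Proof.
move=> Tt; rewrite /post -mulrDl [RHS]mulrAC wstarE.
by rewrite -(weight_ratio_split (P0 Tt) (P0 (symT Tt))).
Qed.

Lemma measurable_post : measurable_fun Theta (post Theta pi L y).
Proof. by apply: measurable_funM; [exact: measurable_funM|exact: measurable_cst]. Qed.

End posterior.

Theorem corollary1 (R : realType) (d : nat) (Theta : set (d.-tuple R))
  (Y : Type) (n : nat) (y : 'I_n -> Y)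
  (pi : d.-tuple R -> R) (L : d.-tuple R -> ('I_n -> Y) -> R)
  (f : d.-tuple R -> R) (th : d.-tuple R) :
  measurable Theta -> Theta th -> symmetric_set th Theta ->
  measurable_fun Theta pi -> measurable_fun Theta (fun t => L t y) ->
  (forall t, Theta t -> 0 <= pi t) -> (forall t, Theta t -> 0 <= L t y) ->
  (0 < int_on Theta (fun t => (pi t * L t y)%:E) < +oo)%E ->
  is_density Theta f -> symmetric_fun th Theta f ->
  let pin := post Theta pi L y in
  let qstar := fun t => 2 * f t * wstar pi L y th t in
  [/\ inQ Theta th f qstar,
      (forall q, inQ Theta th f q ->
         (D_TV Theta pin qstar <= D_TV Theta pin q)%E)
    & (forall a : R, a != 0 -> a != 1 -> forall q, inQ Theta th f q ->
         (D_alpha Theta a pin qstar <= D_alpha Theta a pin q)%E)].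
Proof.
move=> mT _ symT mpi mL pi0 L0 _ [mf f0 _] fsym pin qstar.
have mpin : measurable_fun Theta pin := measurable_post mpi mL.
have pin0 : forall t, Theta t -> 0 <= pin t by exact: post_ge0.
have mws : measurable_fun Theta (wstar pi L y th) by exact: measurable_wstar.
have ws01 : forall t, Theta t -> 0 <= wstar pi L y th t <= 1 by exact: wstar_itv.
have ws_refl : forall t, Theta t -> wstar pi L y th t = 1 - wstar pi L y th (refl th t).
  exact: wstar_refl.
have pin_split : forall t, Theta t -> pin t = (pin t + pin (refl th t)) * wstar pi L y th t.
  exact: post_split.
split; first exact: inQ_weight.
- move=> q; exact: D_TV_weight_le.
- move=> a a0 a1 q; exact: D_alpha_weight_le.
Qed.
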